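(* Let $n$ be a positive integer and let $\Omega_1,\Omega_2$ be two distinct copies of $2^{[n]}$. For $i=1,2$ let $\bm{p}_i=(p_i^{(1)},\dots,p_i^{(n)})$ be a probability vector (i.e. $0<p_i^{(\ell)}<1$), write $p_i:=p_i^{(1)}$, and let $\mu_i$ be the product measure on $\Omega_i$, $\mu_i(U)=\sum_{x\in U}\prod_{\ell\in x}p_i^{(\ell)}\prod_{k\in[n]\setminus x}(1-p_i^{(k)})$. Assume that $p_i=\max\{p_i^{(\ell)}:\ell\in[n]\}$ for $i=1,2$, that $p_1\geqslant p_2$, and that $p_1\leqslant 1/2$. If $U_1\subset\Omega_1$, $U_2\subset\Omega_2$ are cross-intersecting (i.e. $x\cap y\neq\emptyset$ for all $x\in U_1$, $y\in U_2$), then $\mu_1(U_1)\mu_2(U_2)\leqslant p_1p_2$.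
   Context: A probability vector is a vector with all coordinates strictly between $0$ and $1$. *)

From mathcomp Require Import all_boot all_order all_algebra.
Set Implicit Arguments. Unset Strict Implicit. Unset Printing Implicit Defensive.
Import Order.TTheory GRing.Theory Num.Theory.
Local Open Scope ring_scope.

(* Omega = 2^[n] is {set 'I_n}; a family U is {set {set 'I_n}}. *)

Definition prob_vector (R : realFieldType) (n : nat) (p : 'I_n -> R) : Prop :=
  forall l : 'I_n, 0 < p l < 1.

Definition prod_measure (R : realFieldType) (n : nat) (p : 'I_n -> R)
    (U : {set {set 'I_n}}) : R :=
  \sum_(x in U) ((\prod_(l in x) p l) * \prod_(k in ~: x) (1 - p k)).

Definition cross_intersecting (n : nat) (U1 U2 : {set {set 'I_n}}) : Prop :=
  forall x y, x \in U1 -> y \in U2 -> x :&: y != set0.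

From mathcomp Require Import all_boot all_order all_algebra.
From mathcomp Require Import ring lra.
Set Implicit Arguments. Unset Strict Implicit. Unset Printing Implicit Defensive.
Import Order.TTheory GRing.Theory Num.Theory.
Local Open Scope ring_scope.

(* Induction on n, splitting on the first coordinate.  With U^0 (resp. U^1) the slice of sets
   avoiding (resp. containing) it, mu(U) = (1 - q) mu'(U^0) + q mu'(U^1), and the pairs
   (U_1^0, U_2^0 | U_2^1) and (U_1^0 | U_1^1, U_2^0) are again cross-intersecting.  As q_1 <= a,
   q_2 <= b and each slice lies in the union of both, (mu_1(U_1), mu_2(U_2)) is dominated by the
   mix ((1 - a) x0 + a x1, (1 - b) y0 + b y1) of the pairs (x0, y1) and (x1, y0) of measures of
   those smaller cross-intersecting families.  So it suffices to find a down-set of the unit square,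
   containing the degenerate pairs (0, y) and (x, 0), that is closed under this mixing: the region
   cut out by [odds_bound] and [skew_bound] below works, and on it the second bound forces
   xy <= ab. *)

Lemma mixed_quadratic_le (R : realDomainType) (c d g h G H : R) :
  0 <= c -> 0 <= d -> 0 <= h -> 0 <= G -> 0 <= H ->
  c * g <= d * G -> c ^+ 2 * (g * h) <= d ^+ 2 * (G * H) -> h <= G ->
  c ^+ 2 * g + c * d * h <= c * d * G + d ^+ 2 * H.
Proof.
move=> c0 d0 h0 G0 H0 cgG ghGH hG.
have [chH | dHch] := lerP (c * h) (d * H).
  have e1 : c ^+ 2 * g + c * d * h = c * (c * g) + d * (c * h) by ring.
  have e2 : c * d * G + d ^+ 2 * H = c * (d * G) + d * (d * H) by ring.
  by rewrite e1 e2 lerD // ler_wpM2l.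
have {}h0 : 0 < h by move: dHch; have := mulr_ge0 d0 H0; nra.
rewrite -subr_ge0 -(pmulr_rge0 _ h0).
have -> : h * (c * d * G + d ^+ 2 * H - (c ^+ 2 * g + c * d * h)) =
  (d ^+ 2 * (G * H) - c ^+ 2 * (g * h)) + d * (G - h) * (c * h - d * H) by ring.
rewrite addr_ge0 ?subr_ge0 // mulr_ge0 ?mulr_ge0 ?subr_ge0 // ltW //.
Qed.

Lemma convex_mix_le (R : realDomainType) (q c u v w : R) :
  0 <= q <= c -> c <= 1 -> 0 <= u <= w -> 0 <= v <= w -> w <= 1 ->
  0 <= (1 - q) * u + q * v <= (1 - c) * u + c * w /\ (1 - c) * u + c * w <= 1.
Proof. move=> /andP[? ?] ? /andP[? ?] /andP[? ?] ?; split; [apply/andP; split|]; nra. Qed.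

Section ProductMeasure.
Variable R : realFieldType.

Definition weight n (p : 'I_n -> R) (x : {set 'I_n}) : R :=
  \prod_(l < n) (if l \in x then p l else 1 - p l).

Lemma prod_measureE n (p : 'I_n -> R) U : prod_measure p U = \sum_(x in U) weight p x.
Proof.
apply: eq_bigr => x _; rewrite /weight [RHS](bigID (mem x)) /=.
congr (_ * _); first by apply: eq_bigr => l ->.
by apply: eq_big => [l | l]; rewrite in_setC // => /negbTE ->.
Qed.

Definition ptail n (p : 'I_n.+1 -> R) : 'I_n -> R := fun i => p (lift ord0 i).

Definition set_cons n (b : bool) (y : {set 'I_n}) : {set 'I_n.+1} :=
  [set j | if unlift ord0 j is Some i then i \in y else b].

Definition slice n (b : bool) (U : {set {set 'I_n.+1}}) : {set {set 'I_n}} :=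
  [set y | set_cons b y \in U].

Lemma set_cons_bij n : bijective (fun q : bool * {set 'I_n} => set_cons q.1 q.2).
Proof.
exists (fun x : {set 'I_n.+1} => (ord0 \in x, [set i : 'I_n | lift ord0 i \in x])).
  case=> b y /=; congr pair; first by rewrite inE unlift_none.
  by apply/setP => i; rewrite !inE liftK.
move=> x /=; apply/setP => j; rewrite inE.
by case: (unliftP ord0 j) => [i ->|->]; rewrite ?inE.
Qed.

Lemma sum_set_cons n (F : {set 'I_n.+1} -> R) :
  \sum_x F x = \sum_y F (set_cons false y) + \sum_y F (set_cons true y).
Proof.
rewrite (reindex _ (onW_bij _ (set_cons_bij n))) /=.
by rewrite -(pair_big xpredT xpredT (fun b y => F (set_cons b y))) big_bool addrC.
Qed.

Lemma weight_set_cons n (p : 'I_n.+1 -> R) b y :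
  weight p (set_cons b y) = (if b then p ord0 else 1 - p ord0) * weight (ptail p) y.
Proof.
rewrite /weight big_ord_recl inE unlift_none; congr (_ * _).
by apply: eq_bigr => i _; rewrite inE liftK.
Qed.

Lemma prod_measure_slice n (p : 'I_n.+1 -> R) U :
  prod_measure p U =
  (1 - p ord0) * prod_measure (ptail p) (slice false U) +
  p ord0 * prod_measure (ptail p) (slice true U).
Proof.
rewrite !prod_measureE big_mkcond sum_set_cons.
by congr (_ + _); rewrite big_distrr [RHS]big_mkcond; apply: eq_bigr => y _;
  rewrite inE weight_set_cons; case: ifP; rewrite ?mulr0.
Qed.

Lemma weight_ge0 n (p : 'I_n -> R) x : (forall l, 0 <= p l <= 1) -> 0 <= weight p x.
Proof.
move=> p01; apply: prodr_ge0 => l _.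
by case: ifP => _; case/andP: (p01 l); rewrite ?subr_ge0.
Qed.

Lemma prod_measure_ge0 n (p : 'I_n -> R) U : (forall l, 0 <= p l <= 1) -> 0 <= prod_measure p U.
Proof. by move=> p01; rewrite prod_measureE sumr_ge0 // => x _; apply: weight_ge0. Qed.

Lemma prod_measure_subset n (p : 'I_n -> R) (U V : {set {set 'I_n}}) :
  (forall l, 0 <= p l <= 1) -> U \subset V -> prod_measure p U <= prod_measure p V.
Proof.
move=> p01 UV; rewrite !prod_measureE [X in _ <= X](big_setID U) /= (setIidPr UV).
by rewrite lerDl sumr_ge0 // => x _; apply: weight_ge0.
Qed.

Lemma prod_measure_setT n (p : 'I_n -> R) : prod_measure p setT = 1.
Proof.
elim: n p => [|n IHn] p.
  rewrite prod_measureE (big_pred1 set0) /weight ?big_ord0 // => x.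
  by rewrite !inE; apply/esym/eqP/setP => -[].
have sliceT b : slice b setT = setT by apply/setP => y; rewrite !inE.
by rewrite prod_measure_slice !sliceT !IHn !mulr1 subrK.
Qed.

Lemma prod_measure_le1 n (p : 'I_n -> R) U : (forall l, 0 <= p l <= 1) -> prod_measure p U <= 1.
Proof. by move=> p01; rewrite -(prod_measure_setT p) prod_measure_subset ?subsetT. Qed.

End ProductMeasure.

Lemma cross_intersecting_slice n (U1 U2 : {set {set 'I_n.+1}}) b1 b2 :
  cross_intersecting U1 U2 -> ~~ (b1 && b2) -> cross_intersecting (slice b1 U1) (slice b2 U2).
Proof.
move=> U12 b12 x y; rewrite !inE => /U12 /[apply]; apply: contra => /eqP xy0.
apply/eqP/setP => j; rewrite !inE; case: (unliftP ord0 j) => [i _|_].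
  by move/setP: xy0 => /(_ i); rewrite !inE.
exact/negbTE.
Qed.

Lemma cross_intersectingUl n (U1 U2 V : {set {set 'I_n}}) :
  cross_intersecting U1 V -> cross_intersecting U2 V -> cross_intersecting (U1 :|: U2) V.
Proof. by move=> h1 h2 x y; rewrite inE => /orP[]; [exact: h1 | exact: h2]. Qed.

Lemma cross_intersectingUr n (U V1 V2 : {set {set 'I_n}}) :
  cross_intersecting U V1 -> cross_intersecting U V2 -> cross_intersecting U (V1 :|: V2).
Proof. by move=> h1 h2 x y hx; rewrite inE => /orP[]; [exact: h1 | exact: h2]. Qed.

Section Invariant.
Variables (R : realFieldType) (a b : R).
Hypotheses (b_gt0 : 0 < b) (b_le_a : b <= a) (a_le_half : a <= 1 / 2).

Let a_gt0 : 0 < a. Proof. exact: lt_le_trans b_le_a. Qed.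
Let ab_gt0 : 0 < a * b. Proof. exact: mulr_gt0. Qed.
Let two_a_le1 : 2 * a <= 1. Proof. by move: a_le_half; lra. Qed.
Let two_b_le1 : 2 * b <= 1. Proof. by move: b_le_a two_a_le1; lra. Qed.
Let a_lt1 : a < 1. Proof. by move: two_a_le1 a_gt0; lra. Qed.

Definition skew_coef (y : R) := b ^+ 2 + (1 - 2 * b) * y.
Definition odds_coef (y : R) := a * b + (1 - a - b) * y.

(* Both bounds are tight at (x, y) = (a, b), the measures of the families of sets containing
   the first coordinate. *)
Definition odds_bound (x y : R) :=
  (1 - a) * (1 - b) * (x * y) <= a * b * ((1 - x) * (1 - y)).
Definition skew_bound (x y : R) := x * skew_coef y <= a * b * (1 - y).
Definition feasible (x y : R) := odds_bound x y /\ skew_bound x y.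

Lemma odds_boundE x y : odds_bound x y <-> x * odds_coef y <= a * b * (1 - y).
Proof.
rewrite /odds_bound /odds_coef -subr_ge0 -[x * _ <= _]subr_ge0.
by have -> : a * b * ((1 - x) * (1 - y)) - (1 - a) * (1 - b) * (x * y) =
  a * b * (1 - y) - x * (a * b + (1 - a - b) * y) by ring.
Qed.

Lemma skew_coef_gt0 y : 0 <= y -> 0 < skew_coef y.
Proof.
move=> y0; have : 0 <= (1 - 2 * b) * y by rewrite mulr_ge0 // subr_ge0.
rewrite /skew_coef; have := exprn_gt0 2 b_gt0; lra.
Qed.

Lemma odds_coef_gt0 y : 0 <= y -> 0 < odds_coef y.
Proof.
move=> y0; have : 0 <= (1 - a - b) * y.
  by rewrite mulr_ge0 //; move: b_le_a two_a_le1; lra.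
by rewrite /odds_coef; move: ab_gt0; lra.
Qed.

Lemma odds_bound_sum_le1 x y : x <= 1 -> y <= 1 -> odds_bound x y -> x + y <= 1.
Proof.
rewrite /odds_bound => x1 y1 hxy.
have c_gt0 : 0 < (1 - a) * (1 - b).
  by rewrite mulr_gt0 //; move: two_a_le1 two_b_le1; lra.
have d_le_c : a * b <= (1 - a) * (1 - b) by move: b_le_a two_a_le1; nra.
have : (1 - a) * (1 - b) * (x * y) <= (1 - a) * (1 - b) * ((1 - x) * (1 - y)).
  by apply: le_trans hxy _; rewrite ler_wpM2r // mulr_ge0 // subr_ge0.
rewrite ler_pM2l //; nra.
Qed.

Lemma odds_bound_mix x0 x1 y0 y1 :
  0 <= x0 <= x1 -> x1 <= 1 -> 0 <= y0 <= y1 -> y1 <= 1 ->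
  odds_bound x0 y1 -> odds_bound x1 y0 ->
  odds_bound ((1 - a) * x0 + a * x1) ((1 - b) * y0 + b * y1).
Proof.
move=> /andP[x0_ge0 x0_le_x1] x1_le1 /andP[y0_ge0 y0_le_y1] y1_le1 odds01 odds10.
move: two_a_le1 two_b_le1 => ha hb.
have sum01 : x0 + y1 <= 1 by apply: odds_bound_sum_le1 => //; lra.
have sum10 : x1 + y0 <= 1 by apply: odds_bound_sum_le1 => //; lra.
rewrite /odds_bound in odds01 odds10 *.
set c := (1 - a) * (1 - b) in odds01 odds10 *; set d := a * b in odds01 odds10 *.
have c_ge0 : 0 <= c by rewrite mulr_ge0 //; lra.
have d_ge0 : 0 <= d := ltW ab_gt0.
have cg : c * (x0 * y0) <= d * ((1 - x0) * (1 - y0)).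
  have h1 : c * (x0 * y0) <= c * (x1 * y0) by rewrite ler_wpM2l // ler_wpM2r.
  have h2 : d * ((1 - x1) * (1 - y0)) <= d * ((1 - x0) * (1 - y0)).
    by rewrite ler_wpM2l // ler_wpM2r ?lerB // subr_ge0; lra.
  exact: le_trans h1 (le_trans odds10 h2).
have cross : c ^+ 2 * (x0 * y0 * (x1 * y1)) <=
    d ^+ 2 * ((1 - x0) * (1 - y0) * ((1 - x1) * (1 - y1))).
  have -> : c ^+ 2 * (x0 * y0 * (x1 * y1)) = c * (x0 * y1) * (c * (x1 * y0)) by ring.
  have -> : d ^+ 2 * ((1 - x0) * (1 - y0) * ((1 - x1) * (1 - y1))) =
    d * ((1 - x0) * (1 - y1)) * (d * ((1 - x1) * (1 - y0))) by ring.
  by rewrite ler_pM // !mulr_ge0 //; lra.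
have hG : x1 * y1 <= (1 - x0) * (1 - y0) by rewrite [X in X <= _]mulrC ler_pM //; lra.
have diag : c ^+ 2 * (x0 * y0) + c * d * (x1 * y1) <=
    c * d * ((1 - x0) * (1 - y0)) + d ^+ 2 * ((1 - x1) * (1 - y1)).
  by apply: mixed_quadratic_le => //; rewrite mulr_ge0 //; lra.
rewrite -subr_le0.
(* The cross terms of the mixed point are the hypotheses, the diagonal ones are [diag]. *)
have -> : c * (((1 - a) * x0 + a * x1) * ((1 - b) * y0 + b * y1)) -
    d * ((1 - ((1 - a) * x0 + a * x1)) * (1 - ((1 - b) * y0 + b * y1))) =
  (1 - a) * b * (c * (x0 * y1) - d * ((1 - x0) * (1 - y1))) +
  a * (1 - b) * (c * (x1 * y0) - d * ((1 - x1) * (1 - y0))) +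
  (c ^+ 2 * (x0 * y0) + c * d * (x1 * y1) -
    (c * d * ((1 - x0) * (1 - y0)) + d ^+ 2 * ((1 - x1) * (1 - y1)))).
  by rewrite /c /d; ring.
have w01 : 0 <= (1 - a) * b by rewrite mulr_ge0 ?ltW //; lra.
have w10 : 0 <= a * (1 - b) by rewrite mulr_ge0 ?ltW //; lra.
by have := ler_wpM2l w01 odds01; have := ler_wpM2l w10 odds10; lra.
Qed.

Lemma odds_bound_skew x y : 0 <= x -> y <= b -> odds_bound x y -> skew_bound x y.
Proof.
move=> x_ge0 y_le_b /odds_boundE; apply: le_trans; rewrite ler_wpM2l //.
have -> : odds_coef y = skew_coef y + (a - b) * (b - y).
  by rewrite /odds_coef /skew_coef; ring.
by rewrite lerDl mulr_ge0 // subr_ge0.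
Qed.

Lemma skew_bound_mix_weights x0 x1 y0 y1 y e0 e1 :
  0 < e0 -> 0 < e1 -> 0 <= y ->
  x0 * e1 <= a * b * (1 - y1) -> x1 * e0 <= a * b * (1 - y0) ->
  (1 - a) * (1 - y1) * e0 * skew_coef y + a * (1 - y0) * e1 * skew_coef y <=
    (1 - y) * e0 * e1 ->
  skew_bound ((1 - a) * x0 + a * x1) y.
Proof.
move=> e0_gt0 e1_gt0 y_ge0 h0 h1 hw.
rewrite /skew_bound -(ler_pM2r (mulr_gt0 e0_gt0 e1_gt0)).
have s_gt0 := skew_coef_gt0 y_ge0.
have w0 : 0 <= (1 - a) * skew_coef y * e0 by rewrite !mulr_ge0 ?ltW ?subr_gt0.
have w1 : 0 <= a * skew_coef y * e1 by rewrite !mulr_ge0 ?ltW.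
have := ler_wpM2l w0 h0; have := ler_wpM2l w1 h1; have := ler_wpM2l (ltW ab_gt0) hw.
lra.
Qed.

Lemma skew_bound_mix_high x0 x1 y0 y1 :
  b <= y0 <= y1 -> y1 <= 1 -> skew_bound x0 y1 -> skew_bound x1 y0 ->
  skew_bound ((1 - a) * x0 + a * x1) ((1 - b) * y0 + b * y1).
Proof.
move=> /andP[b_le_y0 y0_le_y1] y1_le1 skew01 skew10.
move: b_gt0 two_a_le1 two_b_le1 => b0 ha hb.
have y0_ge0 : 0 <= y0 := le_trans (ltW b_gt0) b_le_y0.
have y1_ge0 : 0 <= y1 := le_trans y0_ge0 y0_le_y1.
have Y_ge0 : 0 <= (1 - b) * y0 + b * y1 by rewrite addr_ge0 ?mulr_ge0 //; lra.
apply: (skew_bound_mix_weights (skew_coef_gt0 y0_ge0) (skew_coef_gt0 y1_ge0) Y_ge0).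
- exact: skew01.
- exact: skew10.
set c := (1 - a) * (1 - b); set d := a * b.
have cd : d * skew_coef y1 <= c * skew_coef y0.
  have h1 : d * skew_coef y1 <= d * (1 - b) ^+ 2.
    apply: ler_wpM2l; first exact: ltW.
    rewrite /skew_coef -subr_ge0.
    have -> : (1 - b) ^+ 2 - (b ^+ 2 + (1 - 2 * b) * y1) = (1 - 2 * b) * (1 - y1) by ring.
    by rewrite mulr_ge0 //; lra.
  have h2 : d * (1 - b) ^+ 2 <= c * (b * (1 - b)).
    rewrite -subr_ge0.
    have -> : c * (b * (1 - b)) - d * (1 - b) ^+ 2 = b * (1 - b) ^+ 2 * (1 - 2 * a).
      by rewrite /c /d; ring.
    by rewrite mulr_ge0 ?subr_ge0 // mulr_ge0 ?sqr_ge0 ?ltW.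
  have h3 : c * (b * (1 - b)) <= c * skew_coef y0.
    apply: ler_wpM2l; first by rewrite mulr_ge0 //; lra.
    rewrite /skew_coef -subr_ge0.
    have -> : b ^+ 2 + (1 - 2 * b) * y0 - b * (1 - b) = (1 - 2 * b) * (y0 - b) by ring.
    by rewrite mulr_ge0 //; lra.
  exact: le_trans h1 (le_trans h2 h3).
rewrite -subr_ge0.
have -> : (1 - ((1 - b) * y0 + b * y1)) * skew_coef y0 * skew_coef y1 -
    ((1 - a) * (1 - y1) * skew_coef y0 * skew_coef ((1 - b) * y0 + b * y1) +
     a * (1 - y0) * skew_coef y1 * skew_coef ((1 - b) * y0 + b * y1)) =
  (1 - b) ^+ 2 * (y1 - y0) * (c * skew_coef y0 - d * skew_coef y1).
  by rewrite /skew_coef /c /d; ring.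
by rewrite mulr_ge0 ?subr_ge0 // mulr_ge0 ?sqr_ge0 ?subr_ge0.
Qed.

Lemma skew_bound_mix_low x0 x1 y0 y1 :
  0 <= y0 <= b -> y0 <= y1 <= 1 -> b <= (1 - b) * y0 + b * y1 ->
  skew_bound x0 y1 -> odds_bound x1 y0 ->
  skew_bound ((1 - a) * x0 + a * x1) ((1 - b) * y0 + b * y1).
Proof.
move=> /andP[y0_ge0 y0_le_b] /andP[y0_le_y1 y1_le1] b_le_Y skew01 /odds_boundE odds10.
move: b_gt0 two_a_le1 two_b_le1 => b0 ha hb.
have y1_ge0 : 0 <= y1 := le_trans y0_ge0 y0_le_y1.
apply: (skew_bound_mix_weights (odds_coef_gt0 y0_ge0) (skew_coef_gt0 y1_ge0) _ skew01 odds10).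
  exact: le_trans (ltW b0) b_le_Y.
set Y := (1 - b) * y0 + b * y1 in b_le_Y *.
rewrite -subr_ge0.
have -> : (1 - Y) * odds_coef y0 * skew_coef y1 -
    ((1 - a) * (1 - y1) * odds_coef y0 * skew_coef Y +
     a * (1 - y0) * skew_coef y1 * skew_coef Y) =
  (1 - a) * (1 - b) * ((1 - y1) * (b - y0) * ((1 - b) ^+ 2 - a * b)) +
  (1 - b) ^+ 3 * ((Y - b) * (1 - y0) * (1 - 2 * a)) +
  a * (1 - 2 * b) * ((Y - b) * (1 - y1) * (odds_coef y0 + (1 - y0) * (1 - 2 * b))).
  by rewrite /Y /odds_coef /skew_coef; ring.
have ab_le : a * b <= (1 - b) ^+ 2 by move: b_le_a; nra.
have w : 0 <= odds_coef y0 + (1 - y0) * (1 - 2 * b).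
  by apply: addr_ge0; [exact: ltW (odds_coef_gt0 _) | apply: mulr_ge0; lra].
have t1 : 0 <= (1 - y1) * (b - y0) * ((1 - b) ^+ 2 - a * b).
  by rewrite !mulr_ge0 // subr_ge0.
have t2 : 0 <= (Y - b) * (1 - y0) * (1 - 2 * a) by rewrite !mulr_ge0 // subr_ge0 //; lra.
have t3 : 0 <= (Y - b) * (1 - y1) * (odds_coef y0 + (1 - y0) * (1 - 2 * b)).
  by rewrite !mulr_ge0 // subr_ge0.
have c_ge0 : 0 <= (1 - a) * (1 - b) by apply: mulr_ge0; lra.
have b3_ge0 : 0 <= (1 - b) ^+ 3 by apply: exprn_ge0; lra.
have a2b_ge0 : 0 <= a * (1 - 2 * b) by apply: mulr_ge0; [exact: ltW | lra].
by rewrite !addr_ge0 // mulr_ge0.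
Qed.

Lemma feasible_mix x0 x1 y0 y1 :
  0 <= x0 <= x1 -> x1 <= 1 -> 0 <= y0 <= y1 -> y1 <= 1 ->
  feasible x0 y1 -> feasible x1 y0 ->
  feasible ((1 - a) * x0 + a * x1) ((1 - b) * y0 + b * y1).
Proof.
move=> hx x1_le1 hy y1_le1 [odds01 skew01] [odds10 skew10].
have odds := odds_bound_mix hx x1_le1 hy y1_le1 odds01 odds10.
split=> //.
case/andP: hx hy => x0_ge0 x0_le_x1 /andP[y0_ge0 y0_le_y1].
have [Y_le_b | b_lt_Y] := lerP ((1 - b) * y0 + b * y1) b.
  apply: odds_bound_skew => //.
  move: a_gt0 a_lt1 => a0 a1.
  by apply: addr_ge0; apply: mulr_ge0; lra.
have [b_le_y0 | y0_lt_b] := lerP b y0.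
  by apply: skew_bound_mix_high; rewrite ?b_le_y0.
apply: skew_bound_mix_low (ltW b_lt_Y) skew01 odds10.
  by rewrite y0_ge0 ltW.
by rewrite y0_le_y1.
Qed.

Lemma feasible_antimono x y x' y' :
  0 <= x <= x' -> x' <= 1 -> 0 <= y <= y' -> y' <= 1 -> feasible x' y' -> feasible x y.
Proof.
move=> /andP[x_ge0 x_le_x'] x'_le1 /andP[y_ge0 y_le_y'] y'_le1 [odds' skew'].
move: a_lt1 two_b_le1 => a1 hb.
have xy : x * y <= x' * y' by apply: ler_pM.
split.
  have c_ge0 : 0 <= (1 - a) * (1 - b) by apply: mulr_ge0; lra.
  have h1 : (1 - x') * (1 - y') <= (1 - x) * (1 - y) by apply: ler_pM; lra.
  exact: le_trans (ler_wpM2l c_ge0 xy) (le_trans odds' (ler_wpM2l (ltW ab_gt0) h1)).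
have s_le : skew_coef y <= skew_coef y'.
  by rewrite /skew_coef lerD2l ler_wpM2l //; lra.
have h1 : x * skew_coef y <= x' * skew_coef y'.
  by apply: ler_pM => //; exact: ltW (skew_coef_gt0 y_ge0).
have h2 : a * b * (1 - y') <= a * b * (1 - y) by apply: ler_wpM2l; [exact: ltW | lra].
exact: le_trans h1 (le_trans skew' h2).
Qed.

Lemma skew_bound_mul_le x y : 0 <= x -> 0 <= y -> skew_bound x y -> x * y <= a * b.
Proof.
move=> x_ge0 y_ge0; rewrite /skew_bound /skew_coef => hxy.
move: b_gt0 b_le_a ab_gt0 two_b_le1 => b0 ba ab0 hb.
rewrite leNgt; apply/negP => ab_lt_xy.
have lin : b * (b * x + a * y) <= b * (2 * a * b) by nra.
rewrite ler_pM2l // in lin.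
have := sqr_ge0 (b * x - a * y).
have : (b * x + a * y) ^+ 2 <= (2 * a * b) ^+ 2 by rewrite ler_sqr ?nnegrE //; nra.
nra.
Qed.

Lemma feasible0l y : 0 <= y <= 1 -> feasible 0 y.
Proof.
case/andP=> y_ge0 y_le1; rewrite /feasible /odds_bound /skew_bound.
rewrite !(mul0r, mulr0) subr0 mul1r.
by split; apply: mulr_ge0; rewrite ?subr_ge0 // ltW.
Qed.

Lemma feasible0r x : 0 <= x <= 1 -> feasible x 0.
Proof.
case/andP=> x_ge0 x_le1; rewrite /feasible /odds_bound /skew_bound /skew_coef.
rewrite !(mulr0, addr0, subr0, mulr1); split.
  by apply: mulr_ge0; rewrite ?subr_ge0 // ltW.
by move: b_gt0 b_le_a; nra.
Qed.

Lemma feasible_prod_measure n (p1 p2 : 'I_n -> R) (U1 U2 : {set {set 'I_n}}) :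
  (forall l, 0 <= p1 l <= a) -> (forall l, 0 <= p2 l <= b) ->
  cross_intersecting U1 U2 -> feasible (prod_measure p1 U1) (prod_measure p2 U2).
Proof.
have a_le1 : a <= 1 := ltW a_lt1.
have b_le1 : b <= 1 := le_trans b_le_a a_le1.
have unit_bound c m (p : 'I_m -> R) :
    c <= 1 -> (forall l, 0 <= p l <= c) -> forall l, 0 <= p l <= 1.
  by move=> c_le1 p_le l; case/andP: (p_le l) => -> /le_trans; apply.
elim: n p1 p2 U1 U2 => [|n IHn] p1 p2 U1 U2 p1_le p2_le U12.
  have p1_01 := unit_bound _ _ _ a_le1 p1_le; have p2_01 := unit_bound _ _ _ b_le1 p2_le.
  have measure0 (p : 'I_0 -> R) (U : {set {set 'I_0}}) :
      set0 \notin U -> prod_measure p U = 0.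
    move=> U0; rewrite /prod_measure big_pred0 // => x.
    by rewrite (_ : x = set0) ?(negbTE U0) //; apply/setP => -[].
  have [U1_has0 | U1_no0] := boolP (set0 \in U1).
    have U2_no0 : set0 \notin U2 by apply/negP => /(U12 _ _ U1_has0); rewrite setI0 eqxx.
    rewrite (measure0 _ _ U2_no0); apply: feasible0r.
    by rewrite prod_measure_ge0 ?prod_measure_le1.
  rewrite (measure0 _ _ U1_no0); apply: feasible0l.
  by rewrite prod_measure_ge0 ?prod_measure_le1.
have q1_le := p1_le ord0; have q2_le := p2_le ord0.
have t1_le l : 0 <= ptail p1 l <= a by apply: p1_le.
have t2_le l : 0 <= ptail p2 l <= b by apply: p2_le.
have t1_01 := unit_bound _ _ _ a_le1 t1_le; have t2_01 := unit_bound _ _ _ b_le1 t2_le.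
rewrite !prod_measure_slice.
set V1 := slice false U1 :|: slice true U1; set V2 := slice false U2 :|: slice true U2.
have feas01 : feasible (prod_measure (ptail p1) (slice false U1)) (prod_measure (ptail p2) V2).
  by apply: IHn => //; apply: cross_intersectingUr; apply: cross_intersecting_slice.
have feas10 : feasible (prod_measure (ptail p1) V1) (prod_measure (ptail p2) (slice false U2)).
  by apply: IHn => //; apply: cross_intersectingUl; apply: cross_intersecting_slice.
have union_bounds m (p : 'I_m -> R) (U V : {set {set 'I_m}}) :
    (forall l, 0 <= p l <= 1) ->
    [/\ 0 <= prod_measure p U <= prod_measure p (U :|: V),
         0 <= prod_measure p V <= prod_measure p (U :|: V) & prod_measure p (U :|: V) <= 1].
  move=> p01; rewrite !prod_measure_ge0 ?prod_measure_le1 //.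
  by rewrite !prod_measure_subset ?subsetUl ?subsetUr.
have [x0_le x1_le x_le1] := union_bounds _ _ (slice false U1) (slice true U1) t1_01.
have [y0_le y1_le y_le1] := union_bounds _ _ (slice false U2) (slice true U2) t2_01.
have [X_le X_le1] := convex_mix_le q1_le a_le1 x0_le x1_le x_le1.
have [Y_le Y_le1] := convex_mix_le q2_le b_le1 y0_le y1_le y_le1.
apply: feasible_antimono X_le X_le1 Y_le Y_le1 _.
exact: feasible_mix x0_le x_le1 y0_le y_le1 feas01 feas10.
Qed.

End Invariant.

Theorem lemma1 (R : realFieldType) (m : nat) (p1 p2 : 'I_m.+1 -> R)
  (U1 U2 : {set {set 'I_m.+1}}) :
  prob_vector p1 -> prob_vector p2 ->
  (forall l, p1 l <= p1 ord0) -> (forall l, p2 l <= p2 ord0) ->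
  p2 ord0 <= p1 ord0 -> p1 ord0 <= 1 / 2 ->
  cross_intersecting U1 U2 ->
  prod_measure p1 U1 * prod_measure p2 U2 <= p1 ord0 * p2 ord0.
Proof.
move=> p1_prob p2_prob p1_max p2_max p21 p1_half U12.
have p2_gt0 : 0 < p2 ord0 by case/andP: (p2_prob ord0).
have unit_bound (p : 'I_m.+1 -> R) : prob_vector p -> forall l, 0 <= p l <= 1.
  by move=> p_prob l; case/andP: (p_prob l) => /ltW -> /ltW.
have max_bound (p : 'I_m.+1 -> R) :
    prob_vector p -> (forall l, p l <= p ord0) -> forall l, 0 <= p l <= p ord0.
  by move=> p_prob p_max l; rewrite p_max andbT; case/andP: (unit_bound _ p_prob l) => ->.
have feas := feasible_prod_measure p2_gt0 p21 p1_half
  (max_bound _ p1_prob p1_max) (max_bound _ p2_prob p2_max) U12.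
apply: (skew_bound_mul_le p2_gt0 p21 p1_half _ _ feas.2);
  by apply: prod_measure_ge0; exact: unit_bound.
Qed.
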